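(* Let $\gamma_X$ be any dynamic metric space and $k\in\mathbf{Z}_+$. For any $\mathbf{a},\mathbf{b}\in\mathbf{R}^6_\times$ with $\mathbf{a}\le\mathbf{b}$ in $\mathbf{R}^6_\times$, one has $\mathrm{rk}_k(\gamma_X)(\mathbf{a})\ge\mathrm{rk}_k(\gamma_X)(\mathbf{b})$ in $\mathbf{Z}_+\cup\{\infty\}$.
   Context: A dynamic metric space (DMS) is a pair $\gamma_X=(X,d_X(\cdot))$ where $X$ is a nonempty finite set and $d_X(\cdot):\mathbf{R}\times X\times X\to\mathbf{R}_+$ satisfies: each $d_X(t)$ is a pseudometric, some $d_X(t_0)$ is a metric, and $t\mapsto d_X(t)(x,x')$ is continuous for all $x,x'$. For a closed interval $I$, $(\bigvee_I d_X)(x,x'):=\min_{s\in I}d_X(s)(x,x')$. For symmetric $d:X\times X\to\mathbf{R}_+$ vanishing on the diagonal, $\mathcal{R}_\delta(X,d)$ is the simplicial complex on $X$ whose simplices are the nonempty $\sigma$ with $d(x,x')\le\delta$ for all $x,x'\in\sigma$; $\mathrm{H}_k$ is simplicial homology over a fixed field. $\mathbf{R}^6_\times$ denotes $\mathbf{R}^6$ with the product order of $\mathbf{R}\times\mathbf{R}^{\mathrm{op}}\times\mathbf{R}^{\mathrm{op}}\times\mathbf{R}^{\mathrm{op}}\times\mathbf{R}\times\mathbf{R}$, i.e. $\mathbf{a}\le\mathbf{b}$ iff $a_1\le b_1$, $a_2\ge b_2$, $a_3\ge b_3$, $a_4\ge b_4$, $a_5\le b_5$, $a_6\le b_6$. A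 vector $\mathbf{a}=(a_1,\dots,a_6)$ is admissible if $a_1\le a_2$, $a_4\le a_5$, $a_3,a_6\ge0$, $[a_1,a_2]\subseteq[a_4,a_5]$ and $a_3\le a_6$; otherwise non-admissible; it is trivially non-admissible if there is no admissible $\mathbf{b}$ with $\mathbf{b}<\mathbf{a}$ in $\mathbf{R}^6_\times$. The (adapted) $k$-th rank invariant $\mathrm{rk}_k(\gamma_X):\mathbf{R}^6\to\mathbf{Z}_+\cup\{\infty\}$ is: the rank of the linear map $\mathrm{H}_k(\mathcal{R}_{a_3}(X,\bigvee_{[a_1,a_2]}d_X)\hookrightarrow\mathcal{R}_{a_6}(X,\bigvee_{[a_4,a_5]}d_X))$ if $\mathbf{a}$ is admissible; $\infty$ if $\mathbf{a}$ is trivially non-admissible; $0$ otherwise. *)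

From HB Require Import structures.
From mathcomp Require Import all_boot all_order all_algebra.
From mathcomp Require Import all_classical all_reals all_analysis.
Set Implicit Arguments. Unset Strict Implicit. Unset Printing Implicit Defensive.
Import Order.TTheory GRing.Theory Num.Theory.
Import numFieldTopology.Exports numFieldNormedType.Exports.
Local Open Scope ring_scope.
Local Open Scope classical_set_scope.

Section DMS.
Variable R : realType.

Record is_dms (X : finType) (d : R -> X -> X -> R) : Prop := {
  dms_nonempty : (0 < #|X|)%N;
  dms_nonneg : forall t x y, 0 <= d t x y;
  dms_diag : forall t x, d t x x = 0;
  dms_sym : forall t x y, d t x y = d t y x;
  dms_tri : forall t x y z, d t x z <= d t x y + d t y z;
  dms_metric : exists t0, forall x y, d t0 x y = 0 -> x = y;
  dms_cont : forall x y, continuous (fun t : R => d t x y) }.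

(* (\/_{[s1,s2]} d)(x,x') = min_{s in [s1,s2]} d(s)(x,x'); the minimum is
   attained by continuity, so it equals the infimum. *)
Definition dmin (X : finType) (d : R -> X -> X -> R) (s1 s2 : R) : X -> X -> R :=
  fun x y => inf [set d t x y | t in [set t | s1 <= t <= s2]].

Definition rips (X : finType) (e : X -> X -> R) (delta : R) : pred {set X} :=
  fun s => (s != finset.set0) && [forall x in s, [forall y in s, e x y <= delta]].

Record vec6 := Vec6 { c1 : R; c2 : R; c3 : R; c4 : R; c5 : R; c6 : R }.

Definition vle (a b : vec6) : Prop :=
  [/\ c1 a <= c1 b, c2 b <= c2 a, c3 b <= c3 a, c4 b <= c4 a &
      (c5 a <= c5 b /\ c6 a <= c6 b)].

Definition vlt (a b : vec6) : Prop := vle a b /\ a <> b.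

Definition admissible (a : vec6) : Prop :=
  [/\ c1 a <= c2 a, c4 a <= c5 a, 0 <= c3 a, 0 <= c6 a &
      ([set t | c1 a <= t <= c2 a] `<=` [set t | c4 a <= t <= c5 a]
       /\ c3 a <= c6 a)].
End DMS.

Arguments vec6 : clear implicits.

Definition trivially_nonadmissible (R : realType) (a : vec6 R) : Prop :=
  ~ (exists b : vec6 R, admissible b /\ vlt b a).

(* Chains are row vectors indexed by the subsets of X (basis e_sigma); *)
(* a simplex sigma is oriented by the order of enum X.                 *)
Section Homology.
Variables (F : fieldType) (X : finType).

Definition nS : nat := #|{set X}|.

Definition esimp (s : {set X}) : 'rV[F]_nS := delta_mx 0 (enum_rank s).

(* boundary of [x_0 < ... < x_q] = sum_i (-1)^i [.., x_i omitted, ..];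
   zero on vertices (unreduced homology). *)
Definition bdry : 'M[F]_nS :=
  \matrix_(i < nS)
    (if (1 < #|enum_val i|)%N then
       \sum_(x in enum_val i)
          (-1) ^+ (index x (enum (enum_val i))) *: esimp (enum_val i :\ x)
     else 0).

(* C_q(K): span of the q-simplices of K *)
Definition chains (K : pred {set X}) (q : nat) : 'M[F]_nS :=
  \matrix_(i, j) (((i == j) && K (enum_val i) && (#|enum_val i| == q.+1)%N)%:R).

Definition cycles (K : pred {set X}) (q : nat) : 'M[F]_nS :=
  (chains K q :&: kermx bdry)%MS.

Definition boundaries (L : pred {set X}) (q : nat) : 'M[F]_nS :=
  chains L q.+1 *m bdry.

(* Rank of H_q(K) -> H_q(L) induced by an inclusion K <= L:
   dim of the image (Z_q(K) + B_q(L)) / B_q(L). *)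
Definition rank_induced (K L : pred {set X}) (q : nat) : nat :=
  (\rank (cycles K q + boundaries L q)%MS - \rank (boundaries L q))%N.
End Homology.

(* Z_+ \cup {oo}: Some n = n, None = oo *)
Definition einf_le (m n : option nat) : bool :=
  match m, n with
  | _, None => true
  | None, Some _ => false
  | Some m, Some n => (m <= n)%N
  end.

Definition rk_inv (R : realType) (F : fieldType) (X : finType)
    (d : R -> X -> X -> R) (k : nat) (a : vec6 R) : option nat :=
  if asbool (admissible a) then
    Some (rank_induced F (rips (dmin d (c1 a) (c2 a)) (c3 a))
                         (rips (dmin d (c4 a) (c5 a)) (c6 a)) k)
  else if asbool (trivially_nonadmissible a) then None
  else Some 0%N.

(* Moving [a] up in R^6_x shrinks the source Rips complex (a minimum over a
   smaller interval is larger, and the radius decreases) and enlarges the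
   target one: fewer cycles and more boundaries, hence a smaller image in
   homology.  Off the admissible region the invariant is monotone by design:
   everything below a trivially non-admissible vector is again trivially
   non-admissible, and a vector squeezed between two admissible ones is
   admissible. *)
From HB Require Import structures.
From mathcomp Require Import all_boot all_order all_algebra.
From mathcomp Require Import all_classical all_reals all_analysis.
From mathcomp Require Import zify.
Set Implicit Arguments. Unset Strict Implicit. Unset Printing Implicit Defensive.
Import Order.TTheory GRing.Theory Num.Theory.
Local Open Scope ring_scope.

Lemma mxrank_adds_sub_mono (F : fieldType) (m1 m2 m3 m4 n : nat)
    (Z1 : 'M[F]_(m1, n)) (Z2 : 'M[F]_(m2, n)) (B1 : 'M[F]_(m3, n)) (B2 : 'M[F]_(m4, n)) :
  (Z1 <= Z2)%MS -> (B1 <= B2)%MS ->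
  (\rank (Z1 + B2) - \rank B2 <= \rank (Z2 + B1) - \rank B1)%N.
Proof.
move=> sZ sB.
have le_sum := mxrankS (addsmxS sZ (submx_refl B2)).
have le_cap := mxrankS (capmxS (submx_refl Z2) sB).
have sum_cap2 := mxrank_sum_cap Z2 B2.
have sum_cap1 := mxrank_sum_cap Z2 B1.
have le_B2 := mxrankS (addsmxSr Z1 B2).
have le_B1 := mxrankS (addsmxSr Z2 B1).
lia.
Qed.

Section Homology.
Variables (F : fieldType) (X : finType).

(* Both are diagonal 0/1 matrices, the first dominated by the second, so
   multiplying by the second fixes the first. *)
Lemma chainsS (K L : pred {set X}) (q : nat) :
  subpred K L -> (chains F K q <= chains F L q)%MS.
Proof.
move=> sKL; suff -> : chains F K q = chains F K q *m chains F L q.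
  exact: submxMl.
apply/matrixP => i j; rewrite !mxE (bigD1 j) //= big1 ?addr0; last first.
  by move=> l /negbTE nlj; rewrite !mxE nlj /= mulr0.
rewrite !mxE eqxx /=; case: eqP => [->|_] /=; last by rewrite mul0r.
case Kj: (K _) => /=; last by rewrite mul0r.
by rewrite (sKL _ Kj); case: (_ == _); rewrite ?mulr1 ?mulr0.
Qed.

Lemma cyclesS (K L : pred {set X}) (q : nat) :
  subpred K L -> (cycles F K q <= cycles F L q)%MS.
Proof. by move=> sKL; apply: capmxS => //; apply: chainsS. Qed.

Lemma boundariesS (K L : pred {set X}) (q : nat) :
  subpred K L -> (boundaries F K q <= boundaries F L q)%MS.
Proof. by move=> sKL; apply: submxMr; apply: chainsS. Qed.

Lemma rank_induced_mono (K1 K2 L1 L2 : pred {set X}) (q : nat) :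
  subpred K1 K2 -> subpred L1 L2 ->
  (rank_induced F K1 L2 q <= rank_induced F K2 L1 q)%N.
Proof.
by move=> sK sL; apply: mxrank_adds_sub_mono; [apply: cyclesS | apply: boundariesS].
Qed.

End Homology.

Section Filtration.
Variables (R : realType) (X : finType).

Lemma dmin_le_subinterval (d : R -> X -> X -> R) (s1 s2 t1 t2 : R) (x y : X) :
  (forall t, 0 <= d t x y) -> t1 <= s1 -> s1 <= s2 -> s2 <= t2 ->
  dmin d t1 t2 x y <= dmin d s1 s2 x y.
Proof.
move=> d_ge0 ts1 s12 st2; apply: lb_le_inf.
  by exists (d s1 x y), s1; rewrite //= lexx s12.
move=> _ [t /= /andP[s1t ts2] <-]; apply: ge_inf.
  by exists 0 => _ [u _ <-]; apply: d_ge0.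
by exists t; rewrite //= (le_trans ts1 s1t) (le_trans ts2 st2).
Qed.

Lemma ripsS (e e' : X -> X -> R) (delta delta' : R) :
  (forall x y, e' x y <= e x y) -> delta <= delta' ->
  subpred (rips e delta) (rips e' delta').
Proof.
move=> le_e le_delta s /andP[s_neq0 /forallP s_small]; rewrite /rips s_neq0.
apply/forallP => x; apply/implyP => xs; apply/forallP => y; apply/implyP => ys.
move: (s_small x) => /implyP/(_ xs)/forallP/(_ y)/implyP/(_ ys) exy.
exact: le_trans (le_e x y) (le_trans exy le_delta).
Qed.

Lemma rips_dminS (d : R -> X -> X -> R) (s1 s2 t1 t2 delta delta' : R) :
  (forall t x y, 0 <= d t x y) -> t1 <= s1 -> s1 <= s2 -> s2 <= t2 ->
  delta <= delta' ->
  subpred (rips (dmin d s1 s2) delta) (rips (dmin d t1 t2) delta').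
Proof. by move=> d_ge0 *; apply: ripsS => // x y; apply: dmin_le_subinterval. Qed.

End Filtration.

Section Order6.
Variable R : realType.
Implicit Types a b c : vec6 R.

Lemma vle_trans a b c : vle a b -> vle b c -> vle a c.
Proof.
case=> h1 h2 h3 h4 [h5 h6] [g1 g2 g3 g4 [g5 g6]].
by split; try split; apply: le_trans; eassumption.
Qed.

Lemma vle_anti a b : vle a b -> vle b a -> a = b.
Proof.
case: a b => [a1 a2 a3 a4 a5 a6] [b1 b2 b3 b4 b5 b6].
case=> /= h1 h2 h3 h4 [h5 h6] [/= g1 g2 g3 g4 [g5 g6]].
by congr Vec6; apply/eqP; rewrite eq_le; apply/andP.
Qed.

Lemma vlt_le_trans a b c : vlt a b -> vle b c -> vlt a c.
Proof.
move=> [ab a_neq_b] bc; split; first exact: vle_trans ab bc.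
by move=> a_eq_c; apply: a_neq_b; apply: (vle_anti ab); rewrite a_eq_c.
Qed.

Lemma admissible_between a b c :
  admissible a -> admissible c -> vle a b -> vle b c -> admissible b.
Proof.
case=> a12 a45 a3 a6 [aI a36] [c12 c45 c3 c6 [cI c36]].
case=> l1 l2 l3 l4 [l5 l6] [m1 m2 m3 m4 [m5 m6]].
split.
- exact: le_trans m1 (le_trans c12 m2).
- exact: le_trans l4 (le_trans a45 l5).
- exact: le_trans c3 m3.
- exact: le_trans a6 l6.
split; last exact: le_trans l3 (le_trans a36 l6).
move=> t /andP[t1 t2].
have /aI /andP[u1 u2] : c1 a <= t <= c2 a.
  by rewrite (le_trans l1 t1) (le_trans t2 l2).
by apply/andP; split; [exact: le_trans l4 u1 | exact: le_trans u2 l5].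
Qed.

Lemma trivially_nonadmissibleW a b :
  vle a b -> trivially_nonadmissible b -> trivially_nonadmissible a.
Proof.
move=> ab tnb [c [adm_c ca]]; apply: tnb.
by exists c; split => //; apply: vlt_le_trans ab.
Qed.

End Order6.

Theorem proposition4p3 (R : realType) (F : fieldType) (X : finType)
    (d : R -> X -> X -> R) (k : nat) (a b : vec6 R) :
  is_dms d -> vle a b -> einf_le (rk_inv F d k b) (rk_inv F d k a).
Proof.
move=> D ab; rewrite /rk_inv.
have d_ge0 := dms_nonneg D.
case: (asboolP (admissible b)) => [adm_b | nadm_b].
  case: (asboolP (admissible a)) => [adm_a | nadm_a].
    case: adm_a adm_b ab => [_ a45 _ _ _] [b12 _ _ _ _] [l1 l2 l3 l4 [l5 l6]].
    by apply: rank_induced_mono; [apply: (rips_dminS d_ge0 l1 b12 l2 l3)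
                                 | apply: (rips_dminS d_ge0 l4 a45 l5 l6)].
  case: (asboolP (trivially_nonadmissible a)) => // ntn_a; exfalso.
  apply: ntn_a => -[c [adm_c [ca _]]].
  exact: nadm_a (admissible_between adm_c adm_b ca ab).
case: (asboolP (trivially_nonadmissible b)) => [tn_b | _]; last first.
  by case: (asbool _) => //; case: (asbool _).
case: (asboolP (admissible a)) => [adm_a | _].
  exfalso; apply: tn_b; exists a; split=> //; split=> // a_eq_b.
  by apply: nadm_b; rewrite -a_eq_b.
by rewrite asboolT //; apply: trivially_nonadmissibleW tn_b.
Qed.
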